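(* Let $\mathcal L$ be a finite distributive lattice, $\mathcal I$ a poset ideal and $\mathcal J$ a poset coideal of $\mathcal L$ with $\mathcal I\cup\mathcal J=\mathcal L$ and $\mathcal I\cap\mathcal J=\emptyset$. Then the ideal $H_{\mathcal I}\cap H_{\mathcal J}$ is generated by the monomials $\mathrm{lcm}(u_p,u_q)$ with $p\in\mathcal J$, $q\in\mathcal I$ and $q$ a lower neighbor of $p$. In particular, all minimal generators of $H_{\mathcal I}\cap H_{\mathcal J}$ have degree $\operatorname{rank}\mathcal L+1$.
   Context: Let $P$ be the set of join-irreducible elements of $\mathcal L$ (elements with exactly one lower neighbor); for $p\in\mathcal L$ put $\ell(p)=\{q\in P:q\le p\}$. Let $K$ be a field, $S=K[x_p,y_p:p\in P]$ (all variables of degree 1), $u_q=\prod_{p\in\ell(q)}x_p\prod_{p\in P\setminus\ell(q)}y_p$ for $q\in\mathcal L$, and for $\mathcal S\subseteq\mathcal L$ let $H_{\mathcal S}=(u_q:q\in\mathcal S)$. Poset ideals are closed downward, poset coideals upward. $\operatorname{rank}\mathcal L$ is the common length of the maximal chains of $\mathcal L$. *)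

From HB Require Import structures.
From mathcomp Require Import all_boot all_order all_algebra.
From mathcomp Require Import mpoly.
Set Implicit Arguments. Unset Strict Implicit. Unset Printing Implicit Defensive.
Import Order.TTheory GRing.Theory.
Local Open Scope order_scope.

Section LatticeDefs.
Context {d : Order.disp_t} {L : finDistrLatticeType d}.

Definition lower_nb (q p : L) : bool :=
  (q < p) && [forall r : L, ~~ ((q < r) && (r < p))].

Definition join_irr (p : L) : bool := #|[set q : L | lower_nb q p]| == 1%N.

Definition poset_ideal (I : {set L}) : Prop :=
  forall p q : L, q <= p -> p \in I -> q \in I.
Definition poset_coideal (J : {set L}) : Prop :=
  forall p q : L, p <= q -> p \in J -> q \in J.

Definition is_chain (C : {set L}) : bool :=
  [forall a in C, forall b in C, (a <= b) || (b <= a)].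

(* rank of L: length (#elements - 1) of a longest chain; in a finite
   distributive lattice all maximal chains have this common length *)
Definition lat_rank : nat := (\max_(C : {set L} | is_chain C) #|C|).-1.
End LatticeDefs.

Definition jirr {d : Order.disp_t} (L : finDistrLatticeType d) : Type :=
  {p : L | join_irr p}.

(* number of variables of S = K[x_p, y_p : p in P]: variables are
   indexed by (jirr L + jirr L): inl p is x_p, inr p is y_p *)
Definition nvars {d : Order.disp_t} (L : finDistrLatticeType d) : nat :=
  #|{: (jirr L + jirr L)%type}|.

Section PolyDefs.
Context {d : Order.disp_t} {L : finDistrLatticeType d} (K : fieldType).
Local Notation S := {mpoly K[nvars L]}.

Definition xv (p : jirr L) : S := 'X_(enum_rank (inl p : (jirr L + jirr L)%type)).
Definition yv (p : jirr L) : S := 'X_(enum_rank (inr p : (jirr L + jirr L)%type)).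

Definition u_gen (q : L) : S :=
  ((\prod_(p : jirr L | (val p <= q)%O) xv p) *
   (\prod_(p : jirr L | ~~ (val p <= q)%O) yv p))%R.

Definition mlcm n (m1 m2 : 'X_{1..n}) : 'X_{1..n} :=
  [multinom maxn (m1 i) (m2 i) | i < n].
Definition mon_lcm (f g : S) : S := 'X_[mlcm (mlead f) (mlead g)].

Definition in_gen_ideal (I : finType) (P : pred I) (g : I -> S) (f : S) : Prop :=
  exists c : I -> S, f = (\sum_(i | P i) c i * g i)%R.

Definition in_H (T : {set L}) (f : S) : Prop := in_gen_ideal (mem T) u_gen f.

Definition mdiv n (m1 m2 : 'X_{1..n}) : bool := [forall i, m1 i <= m2 i]%N.
End PolyDefs.

(* A monomial ideal contains a polynomial iff it contains each of its terms, and
   u_x has exponent 1 at x_p for p <= x and at y_p otherwise.  So a monomial lies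
   in H_I and H_J iff it is divisible by some u_q, q in I, and some u_p, p in J.
   Every u_z with p /\ q <= z <= p then divides lcm(u_p, u_q); taking p' in J
   minimal above p /\ q and a lower neighbour q' >= p /\ q of p' yields a cover
   q' < p' across the cut whose lcm still divides the monomial.  By Birkhoff's
   theorem l(p') is l(q') plus one join-irreducible, so this lcm has degree
   |P| + 1, and |P| is the rank since |l(x)| grows by one along every cover. *)

From HB Require Import structures.
From mathcomp Require Import all_boot all_order all_algebra.
From mathcomp Require Import mpoly.
Import Order.TTheory GRing.Theory.
Local Open Scope order_scope.
Set Implicit Arguments. Unset Strict Implicit. Unset Printing Implicit Defensive.

Section Lattice.
Context {d : Order.disp_t} {L : finDistrLatticeType d}.
Implicit Types (x y z a b r : L).

Definition card_lt x := #|[set v : L | v < x]|.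

Lemma card_lt_mono x y : x < y -> (card_lt x < card_lt y)%N.
Proof.
move=> xy; apply/proper_card/properP; split.
  by apply/subsetP => v; rewrite !inE => vx; apply: lt_trans vx xy.
by exists x; rewrite !inE ?ltxx.
Qed.

Lemma exists_minimal (P : pred L) x0 :
  P x0 -> exists2 x, P x & forall y, P y -> ~~ (y < x).
Proof.
move=> Px0; case: (arg_minnP card_lt Px0) => x Px xmin; exists x => // y Py.
by apply: contraTN (xmin y Py) => yx; rewrite -ltnNge card_lt_mono.
Qed.

Lemma exists_maximal (P : pred L) x0 :
  P x0 -> exists2 x, P x & forall y, P y -> ~~ (x < y).
Proof.
move=> Px0; case: (arg_maxnP card_lt Px0) => x Px xmax; exists x => // y Py.
by apply: contraTN (xmax y Py) => xy; rewrite -ltnNge card_lt_mono.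
Qed.

Lemma lower_nbP y x :
  reflect (y < x /\ forall z, y < z -> ~~ (z < x)) (lower_nb y x).
Proof.
apply: (iffP andP) => [[yx /forallP cov] | [yx cov]]; split=> //.
  by move=> z yz; have := cov z; rewrite yz.
by apply/forallP => z; apply/negP => /andP[/cov/negP].
Qed.

Lemma exists_lower_nb z x : z < x -> exists2 y, lower_nb y x & z <= y.
Proof.
move=> zx; have Pz : (z <= z) && (z < x) by rewrite lexx zx.
have [y /andP[zy yx] ymax] := exists_maximal (P := fun y => (z <= y) && (y < x)) Pz.
exists y => //; apply/lower_nbP; split=> // w yw.
by apply: contraL (yw) => wx; apply: ymax; rewrite /= (le_trans zy (ltW yw)) wx.
Qed.

Lemma join_irr_unique_lower_nb r :
  join_irr r -> exists r', forall w, lower_nb w r = (w == r').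
Proof. by move=> /cards1P[r' r'E]; exists r' => w; rewrite -in_set1 -r'E inE. Qed.

Lemma join_irr_le_join r a b :
  join_irr r -> r <= a `|` b -> (r <= a) || (r <= b).
Proof.
move=> /join_irr_unique_lower_nb[r' lower_nb_r] rab.
apply: contraT; rewrite negb_or => /andP[ra rb].
have meet_lt c : ~~ (r <= c) -> r `&` c < r.
  by move=> rc; rewrite lt_neqAle eq_meetl rc leIl.
have [_ /[1!lower_nb_r]/eqP-> ar'] := exists_lower_nb (meet_lt a ra).
have [_ /[1!lower_nb_r]/eqP-> br'] := exists_lower_nb (meet_lt b rb).
have /lower_nbP[r'r _] : lower_nb r' r by rewrite lower_nb_r.
suff : r <= r' by rewrite (lt_geF r'r).
by rewrite -(meet_idPl rab) meetUr leUx ar' br'.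
Qed.

Lemma join_irr_separates x y :
  ~~ (x <= y) -> exists r, [&& join_irr r, r <= x & ~~ (r <= y)].
Proof.
move=> xy; have Px : (x <= x) && ~~ (x <= y) by rewrite lexx.
have [r /andP[rx ry] rmin] := exists_minimal (P := fun r => (r <= x) && ~~ (r <= y)) Px.
exists r; rewrite rx ry /= andbT; apply/cards1P.
have below_y b : b < r -> b <= y.
  by move=> br; apply: contraTT (br) => by'; apply: rmin; rewrite /= (le_trans (ltW br) rx).
have ryr : r `&` y < r by rewrite lt_neqAle eq_meetl ry leIl.
have [a ar rya] := exists_lower_nb ryr.
exists a; apply/setP => b; rewrite !inE; apply/idP/eqP => [br | -> //].
have /lower_nbP[blt bcov] := br; have /lower_nbP[alt _] := ar.
have : b <= a by rewrite (le_trans _ rya) // lexI (ltW blt) below_y.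
by rewrite le_eqVlt => /orP[/eqP // | /bcov]; rewrite alt.
Qed.

Definition ell x : {set jirr L} := [set r : jirr L | val r <= x].

Lemma ell_proper x y : x < y -> ell x \proper ell y.
Proof.
move=> xy; apply/properP; split.
  by apply/subsetP => r; rewrite !inE => rx; apply: le_trans rx (ltW xy).
have [r /and3P[jr ry rx]] := join_irr_separates (negbT (lt_geF xy)).
by exists (exist _ r jr); rewrite !inE.
Qed.

Lemma card_ell_lt x y : x < y -> (#|ell x| < #|ell y|)%N.
Proof. by move=> /ell_proper/proper_card. Qed.

Lemma card_ell_lower_nb y x : lower_nb y x -> #|ell x| = #|ell y|.+1.
Proof.
move=> /lower_nbP[yx cov].
have join_y s : s <= x -> ~~ (s <= y) -> s `|` y = x.
  move=> sx sy; have : s `|` y <= x by rewrite leUx sx ltW.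
  rewrite le_eqVlt => /orP[/eqP // | sxy].
  by have := cov (s `|` y); rewrite lt_def eq_joinr sy leUr sxy => /(_ isT).
have [r0 /and3P[jr0 r0x r0y]] := join_irr_separates (negbT (lt_geF yx)).
suff -> : ell x = exist _ r0 jr0 |: ell y by rewrite cardsU1 inE r0y.
apply/setP => r; rewrite !inE; case: (boolP (val r <= y)) => ry.
  by rewrite (le_trans ry (ltW yx)) orbT.
rewrite orbF; apply/idP/eqP => [rx | -> //]; apply/val_inj/le_anti.
have rr0 : val r <= r0 `|` y by rewrite join_y.
have r0r : r0 <= val r `|` y by rewrite join_y.
move: (join_irr_le_join (valP r) rr0) (join_irr_le_join jr0 r0r).
by rewrite (negbTE ry) (negbTE r0y) !orbF /= => -> ->.
Qed.

Lemma is_chainP (C : {set L}) :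
  reflect {in C &, forall a b, (a <= b) || (b <= a)} (is_chain C).
Proof.
apply: (iffP forall_inP) => [Cchain a b aC bC | Cchain a aC].
  exact: forall_inP (Cchain a aC) b bC.
by apply/forall_inP => b bC; apply: Cchain.
Qed.

Lemma exists_chain_below x :
  exists C : {set L}, [/\ is_chain C, {in C, forall c, c <= x} & #|C| = #|ell x|.+1].
Proof.
have [n] := ubnP (card_lt x); elim: n x => // n IHn x /ltnSE xn.
case: (pickP (fun z => z < x)) => [z zx | xmin]; last first.
  exists [set x]; split.
  - by apply/is_chainP => a b /set1P-> /set1P->; rewrite lexx.
  - by move=> c /set1P->.
  rewrite cards1 (_ : ell x = set0) ?cards0 //; apply/setP => r.
  rewrite !inE; apply/negP => rx.
  have [q qE] := join_irr_unique_lower_nb (valP r).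
  have /lower_nbP[qr _] : lower_nb q (val r) by rewrite qE.
  by have := xmin q; rewrite (lt_le_trans qr rx).
have [y yx _] := exists_lower_nb zx; have /lower_nbP[ltyx _] := yx.
have [C [Cchain Cy Ccard]] := IHn y (leq_trans (card_lt_mono ltyx) xn).
have Cx c : c \in C -> c <= x by move=> /Cy cy; apply: le_trans cy (ltW ltyx).
exists (x |: C); split.
- apply/is_chainP => a b; rewrite !in_setU1 => /orP[/eqP-> | aC] /orP[/eqP-> | bC];
    by rewrite ?lexx ?Cx ?orbT ?(is_chainP _ Cchain).
- by move=> c; rewrite in_setU1 => /orP[/eqP-> // | /Cx].
rewrite cardsU1 Ccard (card_ell_lower_nb yx); suff -> : x \notin C by [].
by apply/negP => /Cy; rewrite (lt_geF ltyx).
Qed.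

Lemma card_chain_le (C : {set L}) : is_chain C -> (#|C| <= #|{: jirr L}|.+1)%N.
Proof.
move=> /is_chainP Cchain.
have ell_lt c : (#|ell c| < #|{: jirr L}|.+1)%N by rewrite ltnS max_card.
pose f c := Ordinal (ell_lt c).
rewrite -(card_in_imset (f := f)).
  by rewrite (leq_trans (max_card _)) ?card_ord.
move=> a b aC bC /(congr1 val) /= ab.
case: (comparable_ltgtP (Cchain a b aC bC)) => // lt;
  by have := card_ell_lt lt; rewrite ab ltnn.
Qed.

Lemma exists_ell_setT (x0 : L) : exists x, ell x = setT.
Proof.
have [x _ xmax] := exists_maximal (P := predT) (isT : predT x0).
exists x; apply/setP => r; rewrite !inE; apply: contraT => rx.
by have := xmax (x `|` val r) isT; rewrite lt_def eq_joinl rx leUl.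
Qed.

Lemma lat_rank_card_jirr (x0 : L) : lat_rank (L:=L) = #|{: jirr L}|.
Proof.
have [x ellT] := exists_ell_setT x0.
have [C [Cchain _ Ccard]] := exists_chain_below x.
rewrite /lat_rank; suff -> : (\max_(C : {set L} | is_chain C) #|C|)%N = #|{: jirr L}|.+1 by [].
apply/anti_leq/andP; split; first exact/bigmax_leqP/card_chain_le.
by rewrite -cardsT -ellT -Ccard (leq_bigmax_cond _ Cchain).
Qed.

Lemma exists_lower_nb_across (J : {set L}) a p :
  a \notin J -> p \in J -> a <= p ->
  exists p' q', [/\ p' \in J, q' \notin J, lower_nb q' p', a <= q' & p' <= p].
Proof.
move=> aJ pJ ap; have Pp : [&& p \in J, a <= p & p <= p] by rewrite pJ ap lexx.
have [p' /and3P[p'J ap' p'p] p'min] :=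
  exists_minimal (P := fun z => [&& z \in J, a <= z & z <= p]) Pp.
have ap'lt : a < p' by rewrite lt_neqAle ap' andbT; apply: contraNneq aJ => ->.
have [q' q'p' aq'] := exists_lower_nb ap'lt; have /lower_nbP[q'lt _] := q'p'.
exists p', q'; split=> //; apply: contraL (q'lt) => q'J.
by apply: p'min; rewrite /= q'J aq' (le_trans (ltW q'lt) p'p).
Qed.

End Lattice.

Lemma sum_nat_eqb (T : finType) (B : pred T) (p0 : T) :
  (\sum_(p | B p) (p == p0))%N = B p0.
Proof.
rewrite big_mkcond (bigD1 p0) //= eqxx big1 ?addn0; first by case: (B p0).
by move=> p /negbTE->; case: (B p).
Qed.

Lemma sum_mem_card (T : finType) (A : {set T}) : (\sum_t (t \in A : nat))%N = #|A|.
Proof. by rewrite -sum1_card [RHS]big_mkcond; apply: eq_bigr => t _; case: (t \in A). Qed.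

Section MonomialIdeal.
Variables (n : nat) (R : nzRingType) (I : finType) (P : pred I) (g : I -> 'X_{1..n}).

Lemma monomial_combP (f : {mpoly R[n]}) :
  (exists c : I -> {mpoly R[n]}, f = \sum_(i | P i) c i * 'X_[g i])%R <->
  (forall m, m \in msupp f -> exists2 i, P i & (g i <= m)%MM).
Proof.
split=> [[c ->] m | fdiv].
  rewrite mcoeff_msupp raddf_sum /=.
  case: (pickP (fun i => P i && (g i <= m)%MM)) => [i /andP[]|nodiv]; first by exists i.
  rewrite big1 ?eqxx // => i Pi; apply/eqP.
  rewrite mcoeff_eq0 (perm_mem (msuppMX _ _)); apply/mapP => -[m' _ mE].
  by have := nodiv i; rewrite Pi mE lem_addr.
pose pick_i m := [pick i | P i && (g i <= m)%MM].
exists (fun i => \sum_(m <- msupp f)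
  (if pick_i m == Some i then f@_m *: 'X_[m - g i] else 0))%R.
rewrite {1}(mpolyE f); under [RHS]eq_bigr do rewrite big_distrl /=.
rewrite exchange_big /=; apply: eq_big_seq => m mf; rewrite /pick_i.
case: pickP => [i /andP[Pi gim] | nodiv]; last first.
  by have [i Pi gim] := fdiv m mf; have := nodiv i; rewrite Pi gim.
rewrite (bigD1 i) //= eqxx -scalerAl -mpolyXD submK // big1 ?addr0 // => j /andP[_ ji].
by rewrite (inj_eq Some_inj) eq_sym (negbTE ji) mul0r.
Qed.

End MonomialIdeal.

Section Generators.
Context {d : Order.disp_t} {L : finDistrLatticeType d} (K : fieldType).
Local Notation V := (jirr L + jirr L)%type.
Local Notation S := {mpoly K[nvars L]}.

Lemma in_gen_idealX (T : finType) (P : pred T) (G : T -> S)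
    (g : T -> 'X_{1..nvars L}) (f : S) :
  (forall i, G i = 'X_[g i]) ->
  in_gen_ideal P G f <-> (forall m, m \in msupp f -> exists2 i, P i & (g i <= m)%MM).
Proof.
move=> GE; rewrite -monomial_combP.
by split=> -[c ->]; exists c; apply: eq_bigr => i _; rewrite GE.
Qed.

Definition u_exp (x : L) : 'X_{1..nvars L} :=
  (\big[+%MM/0%MM]_(p : jirr L | (val p <= x)%O) U_(enum_rank (inl p : V)) +
   \big[+%MM/0%MM]_(p : jirr L | ~~ (val p <= x)%O) U_(enum_rank (inr p : V)))%MM.

Lemma u_genE x : u_gen K x = 'X_[u_exp x].
Proof.
rewrite /u_gen /xv /yv /u_exp mpolyXD.
by rewrite -!(big_morph (fun m => 'X_[m] : S) (@mpolyXD _ K) (mpolyX0 _ _)).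
Qed.

Lemma u_expE x (v : V) : u_exp x (enum_rank v) =
  match v with inl p => ((val p <= x)%O : nat) | inr p => (~~ (val p <= x)%O : nat) end.
Proof.
rewrite mnmDE !mnm_sumE.
under eq_bigr do rewrite mnm1E (inj_eq enum_rank_inj).
under [X in (_ + X)%N]eq_bigr do rewrite mnm1E (inj_eq enum_rank_inj).
by case: v => p0 /=; rewrite sum_nat_eqb big1 ?addn0.
Qed.

Lemma u_exp_le x m : (u_exp x <= m)%MM <->
  (forall p : jirr L, val p <= x -> (0 < m (enum_rank (inl p : V)))%N) /\
  (forall p : jirr L, ~~ (val p <= x) -> (0 < m (enum_rank (inr p : V)))%N).
Proof.
split=> [/mnm_lepP um | [xm ym]].
  by split=> p px; [have := um (enum_rank (inl p : V)) | have := um (enum_rank (inr p : V))];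
    rewrite u_expE px.
apply/mnm_lepP => i; rewrite -(enum_valK i) u_expE.
by case: (enum_val i) => p; case: (boolP (val p <= x)) => px //=; [apply: xm | apply: ym].
Qed.

Lemma u_exp_le_interval p q z m : p `&` q <= z -> z <= p ->
  (u_exp p <= m)%MM -> (u_exp q <= m)%MM -> (u_exp z <= m)%MM.
Proof.
move=> pqz zp /u_exp_le[xp yp] /u_exp_le[_ yq]; apply/u_exp_le; split=> r rz.
  exact/xp/(le_trans rz zp).
have : ~~ (val r <= p `&` q) by apply: contraNN rz => /le_trans; apply.
by rewrite lexI negb_and => /orP[/yp | /yq].
Qed.

Lemma in_H_msupp (T : {set L}) (f : S) :
  in_H T f <-> (forall m, m \in msupp f -> exists2 q, q \in T & (u_exp q <= m)%MM).
Proof. exact: in_gen_idealX u_genE. Qed.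

Lemma in_HX (T : {set L}) m :
  in_H T ('X_[m] : S) <-> exists2 q, q \in T & (u_exp q <= m)%MM.
Proof.
rewrite in_H_msupp msuppX; split=> [/(_ m (mem_head _ _)) // | Tm m'].
by rewrite mem_seq1 => /eqP->.
Qed.

Lemma mdeg_mlcm_cover p q : lower_nb q p ->
  mdeg (mlcm (u_exp p) (u_exp q)) = #|{: jirr L}|.+1.
Proof.
move=> qp; have /lower_nbP[/ltW qlep _] := qp.
rewrite mdegE (reindex _ (onW_bij _ (@enum_rank_bij V))) big_sumType /=.
rewrite (eq_bigr (fun r => (r \in ell p : nat))) => [|r _]; last first.
  rewrite mnmE !u_expE inE; case: (boolP (val r <= q)) => rq; last by rewrite maxn0.
  by rewrite (le_trans rq qlep).
rewrite [X in (_ + X)%N](eq_bigr (fun r => (r \in ~: ell q : nat))) => [|r _]; last first.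
  rewrite mnmE !u_expE !inE; case: (boolP (val r <= q)) => rq /=.
    by rewrite (le_trans rq qlep).
  by case: (val r <= p).
by rewrite !sum_mem_card (card_ell_lower_nb qp) addSn cardsC.
Qed.

Section Cover.
Variables (I J : {set L}).
Hypotheses (idealI : poset_ideal I) (partIJ : I :|: J = [set: L]) (disjIJ : I :&: J = set0).

Lemma mem_ideal_compl z : (z \in I) = (z \notin J).
Proof.
have /setP/(_ z) := partIJ; have /setP/(_ z) := disjIJ; rewrite !inE.
by case: (z \in I); case: (z \in J).
Qed.

Lemma exists_cover_lcm_le m p q : p \in J -> q \in I ->
  (u_exp p <= m)%MM -> (u_exp q <= m)%MM ->
  exists2 pq : L * L, [&& pq.1 \in J, pq.2 \in I & lower_nb pq.2 pq.1]
    & (mlcm (u_exp pq.1) (u_exp pq.2) <= m)%MM.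
Proof.
move=> pJ qI up uq.
have pqJ : p `&` q \notin J by rewrite -mem_ideal_compl (idealI (leIr q p) qI).
have [p' [q' [p'J q'J q'p' pqq' p'p]]] := exists_lower_nb_across pqJ pJ (leIl p q).
have /lower_nbP[/ltW q'lep' _] := q'p'.
exists (p', q'); first by rewrite /= p'J mem_ideal_compl q'J.
rewrite lem_mlcm !(u_exp_le_interval _ _ up uq) //=; last exact: le_trans pqq' q'lep'.
exact: le_trans q'lep' p'p.
Qed.

Lemma in_H_cap (f : S) : in_H I f /\ in_H J f <->
  (forall m, m \in msupp f ->
     exists2 pq : L * L, [&& pq.1 \in J, pq.2 \in I & lower_nb pq.2 pq.1]
       & (mlcm (u_exp pq.1) (u_exp pq.2) <= m)%MM).
Proof.
rewrite !in_H_msupp; split=> [[fI fJ] m mf | fcov].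
  have [q qI uq] := fI m mf; have [p pJ up] := fJ m mf.
  exact: exists_cover_lcm_le pJ qI up uq.
split=> m /fcov[[p q] /and3P[pJ qI _]]; rewrite lem_mlcm => /andP[up uq].
  by exists q.
by exists p.
Qed.

End Cover.

End Generators.

Theorem lemma3p11 (K : fieldType) (d : Order.disp_t) (L : finDistrLatticeType d)
    (I J : {set L}) :
  poset_ideal I -> poset_coideal J ->
  I :|: J = [set: L] -> I :&: J = set0 ->
  (forall f : {mpoly K[nvars L]},
     (in_H I f /\ in_H J f) <->
     in_gen_ideal
       [pred pq : L * L | [&& pq.1 \in J, pq.2 \in I & lower_nb pq.2 pq.1]]
       (fun pq => mon_lcm (u_gen K pq.1) (u_gen K pq.2)) f) /\
  (forall m : 'X_{1..nvars L},
     (in_H I ('X_[m] : {mpoly K[nvars L]}) /\ in_H J ('X_[m] : {mpoly K[nvars L]})) ->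
     (forall m' : 'X_{1..nvars L},
        (in_H I ('X_[m'] : {mpoly K[nvars L]}) /\ in_H J ('X_[m'] : {mpoly K[nvars L]})) ->
        mdiv m' m -> m' = m) ->
     mdeg m = (lat_rank (L:=L)).+1).
Proof.
move=> idealI _ partIJ disjIJ.
have lcmE (pq : L * L) :
    mon_lcm (u_gen K pq.1) (u_gen K pq.2) = 'X_[mlcm (u_exp pq.1) (u_exp pq.2)].
  by rewrite /mon_lcm !u_genE !mleadXm.
split=> [f | m [/in_HX[q qI uq] /in_HX[p pJ up]] mmin].
  by rewrite (in_gen_idealX _ _ lcmE) in_H_cap.
have [[p' q'] /and3P[p'J q'I q'p'] lcm_le] :=
  exists_cover_lcm_le idealI partIJ disjIJ pJ qI up uq.
rewrite -(mmin (mlcm (u_exp p') (u_exp q'))) ?mdeg_mlcm_cover ?(lat_rank_card_jirr p) //.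
by split; apply/in_HX; [exists q' | exists p'] => //; rewrite ?lem_mlcml ?lem_mlcmr.
Qed.
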